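(* Let $G=(V,E)$ be a directed graph with $n$ vertices, $m$ edges and oriented incidence matrix $D\in\mathbb{R}^{m\times n}$, and let $\bm{y}\in\mathbb{R}^{n}$ be a signal over its nodes. Let $\Delta$ be either $L=D^{T}D$ (general trend filtering) or the Kronecker matrix $K$ (Kronecker trend filtering, when $G$ is the grid graph of a lattice $\{1,\dots,N\}^k$). For penalisation parameters $\lambda_{NI},\lambda_{F},\lambda_{T}>0$ let $$\hat{\bm{\beta}}^{NITF}=\arg\min_{\bm{\beta}\in\mathbb{R}^{n}}\tfrac12\|\bm{y}-\bm{\beta}\|_2^2+\lambda_{NI}\|D\bm{\beta}\|_{+}+\lambda_{T}\|\Delta\bm{\beta}\|_1,$$ $$\hat{\bm{\beta}}^{FLTF}=\arg\min_{\bm{\beta}\in\mathbb{R}^{n}}\tfrac12\|\bm{y}-\bm{\beta}\|_2^2+\lambda_{F}\|D\bm{\beta}\|_1+\lambda_{T}\|\Delta\bm{\beta}\|_1.$$ Then for any such parameters $$\sum_{i=1}^{n}y_i=\sum_{i=1}^{n}\hat{\beta}^{NITF}_i=\sum_{i=1}^{n}\hat{\beta}^{FLTF}_i.$$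
   Context: The oriented incidence matrix $D\in\mathbb{R}^{m\times n}$ has $D_{i,j}=1$ if vertex $j$ is the source of edge $i$, $D_{i,j}=-1$ if vertex $j$ is the target of edge $i$, and $0$ otherwise. For $\bm{x}\in\mathbb{R}^m$, $\|\bm{x}\|_{+}=\sum_i\max(x_i,0)$. For the lattice $\{1,\dots,N\}^{k}$ (with edges between lattice neighbours differing by $1$ in one coordinate, oriented in the increasing direction), $D^{t}\in\mathbb{R}^{(N-2)\times N}$ is the second-difference matrix whose $i$-th row has entries $1,-2,1$ in columns $i,i+1,i+2$ and zeros elsewhere, and $K$ is the vertical stack of the $k$ blocks $I_N\otimes\cdots\otimes D^{t}\otimes\cdots\otimes I_N$ ($D^{t}$ in the $j$-th position, $j=1,\dots,k$), $\otimes$ the Kronecker product. *)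

From HB Require Import structures.
From mathcomp Require Import all_boot all_order all_algebra.
From mathcomp Require Import reals.
Set Implicit Arguments. Unset Strict Implicit. Unset Printing Implicit Defensive.
Import Order.TTheory GRing.Theory Num.Theory.
Local Open Scope ring_scope.

Definition incidence {R : pzRingType} (m n : nat) (src tgt : 'I_m -> 'I_n)
  : 'M[R]_(m, n) :=
  \matrix_(e < m, j < n) ((j == src e)%:R - (j == tgt e)%:R).

Definition norm1 {R : numDomainType} p (x : 'cV[R]_p) : R := \sum_(i < p) `|x i 0|.
Definition normplus {R : numDomainType} p (x : 'cV[R]_p) : R :=
  \sum_(i < p) Num.max (x i 0) 0.
Definition sqnorm2 {R : numDomainType} p (x : 'cV[R]_p) : R := \sum_(i < p) (x i 0) ^+ 2.

(* entry of a matrix at natural-number indices (0 outside the range) *)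
Definition mx_at {R : pzRingType} m n (A : 'M[R]_(m, n)) (i j : nat) : R :=
  match @insub _ (fun x => x < m)%N 'I_m i, @insub _ (fun x => x < n)%N 'I_n j with
  | Some i', Some j' => A i' j'
  | _, _ => 0
  end.

Definition kron {R : pzRingType} m1 n1 m2 n2 (A : 'M[R]_(m1, n1)) (B : 'M[R]_(m2, n2))
  : 'M[R]_(m1 * m2, n1 * n2) :=
  \matrix_(i < m1 * m2, j < n1 * n2)
    (mx_at A (i %/ m2) (j %/ n2) * mx_at B (i %% m2) (j %% n2)).

Definition secdiff {R : pzRingType} (N : nat) : 'M[R]_(N - 2, N) :=
  \matrix_(i < N - 2, j < N)
    (if j == i :> nat then 1 else if j == i.+1 :> nat then -2
     else if j == i.+2 :> nat then 1 else 0).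

Lemma kron_cols_eq (N k : nat) (j : 'I_k) : (N ^ j * N * N ^ (k - j.+1) = N ^ k)%N.
Proof.
by rewrite -expnSr -expnD subnKC // ltn_ord.
Qed.

(* the j-th block (0-indexed) I_{N^j} ⊗ D^t ⊗ I_{N^(k-1-j)}, i.e.
   I_N ⊗ ... ⊗ D^t ⊗ ... ⊗ I_N with D^t in position j+1 *)
Definition kron_block {R : pzRingType} (N k : nat) (j : 'I_k)
  : 'M[R]_(N ^ j * (N - 2) * N ^ (k - j.+1), N ^ k) :=
  castmx (erefl _, kron_cols_eq N j)
    (kron (kron (1%:M : 'M[R]_(N ^ j)) (secdiff N)) (1%:M : 'M[R]_(N ^ (k - j.+1)))).

Definition kronK {R : pzRingType} (N k : nat) :
  'M[R]_(\sum_(j < k) (N ^ j * (N - 2) * N ^ (k - j.+1)), N ^ k) :=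
  \mxcol_(j < k) kron_block N j.

(* Lattice {1,...,N}^k: vertex v < N^k has coordinate j (0-indexed, j = 0
   most significant, consistent with the Kronecker ordering) equal to
   (v %/ N^(k-1-j)) %% N.  (u, v) is a grid edge oriented in the increasing
   direction iff v is u with one coordinate increased by 1. *)
Definition coord (N k : nat) (j : nat) (v : nat) : nat := (v %/ N ^ (k - j.+1)) %% N.

Definition grid_edge (N k : nat) (u v : 'I_(N ^ k)) : Prop :=
  exists j : 'I_k, (coord N k j u < N.-1)%N /\ (v : nat) = (u + N ^ (k - j.+1))%N.

Definition is_grid_graph (N k m : nat) (src tgt : 'I_m -> 'I_(N ^ k)) : Prop :=
  (forall e, grid_edge (src e) (tgt e)) /\
  (forall u v, grid_edge u v -> exists! e, src e = u /\ tgt e = v).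

Definition obj_NITF {R : realType} n m p (D : 'M[R]_(m, n)) (Delta : 'M[R]_(p, n))
  (lamNI lamT : R) (y beta : 'cV[R]_n) : R :=
  2^-1 * sqnorm2 (y - beta) + lamNI * normplus (D *m beta) + lamT * norm1 (Delta *m beta).

Definition obj_FLTF {R : realType} n m p (D : 'M[R]_(m, n)) (Delta : 'M[R]_(p, n))
  (lamF lamT : R) (y beta : 'cV[R]_n) : R :=
  2^-1 * sqnorm2 (y - beta) + lamF * norm1 (D *m beta) + lamT * norm1 (Delta *m beta).

Definition is_argmin {R : realType} n (f : 'cV[R]_n -> R) (beta : 'cV[R]_n) : Prop :=
  forall b, f beta <= f b.

From HB Require Import structures.
From mathcomp Require Import all_boot all_order all_algebra.
From mathcomp Require Import reals.
From mathcomp Require Import ring lra zify.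
Import Order.TTheory GRing.Theory Num.Theory.
Local Open Scope ring_scope.

(* Both penalised matrices annihilate the constant vectors: the rows of an
   incidence matrix are [e_src - e_tgt], those of the second-difference matrix
   are [1, -2, 1], every row of a Kronecker product with such a factor sums to
   zero, and [L = D^T D] inherits the property from [D].  Hence the penalty is
   invariant under [beta |-> beta + c 1], and optimality of [beta] against all
   these shifts says that [c = 0] minimises [|y - beta - c 1|^2], i.e. that
   the residual [y - beta] has zero sum. *)

Local Notation ones n := (const_mx 1 : 'cV_n).

Section RowSums.
Variable R : pzRingType.

Lemma rowsum0_mul_ones m n (M : 'M[R]_(m, n)) :
  (forall i, \sum_j M i j = 0) -> M *m ones n = 0.
Proof.
move=> rowsum0; apply/matrixP => i j; rewrite !mxE -[RHS](rowsum0 i).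
by apply: eq_bigr => l _; rewrite mxE mulr1.
Qed.

Lemma castmx_mul_ones m n n' (eq_n : n = n') (M : 'M[R]_(m, n)) :
  M *m ones n = 0 -> castmx (erefl m, eq_n) M *m ones n' = 0.
Proof. by case: n' / eq_n; rewrite castmx_id. Qed.

Lemma sum_indicator_ord n c : (c < n)%N -> \sum_(j < n) ((j == c :> nat)%:R : R) = 1.
Proof.
move=> lt_cn; rewrite (bigD1 (Ordinal lt_cn)) //= eqxx big1 ?addr0 // => j.
by case: (eqVneq (j : nat) c) => // jc /eqP[]; apply: val_inj.
Qed.

Lemma incidence_mul_ones m n (src tgt : 'I_m -> 'I_n) :
  incidence (R := R) src tgt *m ones n = 0.
Proof.
apply: rowsum0_mul_ones => e; under eq_bigr do rewrite mxE.
by rewrite sumrB !sum_indicator_ord ?subrr ?ltn_ord.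
Qed.

Lemma secdiff_rowsum N (i : 'I_(N - 2)) : \sum_j secdiff (R := R) N i j = 0.
Proof.
have lt_i2N : (i.+2 < N)%N by move: (ltn_ord i); lia.
transitivity (\sum_(j < N) ((j == i :> nat)%:R - 2 * (j == i.+1 :> nat)%:R
                             + (j == i.+2 :> nat)%:R : R)).
{ apply: eq_bigr => -[j lt_jN] _; rewrite mxE /=.
  case: (eqVneq j i) => ?; case: (eqVneq j i.+1) => ?; case: (eqVneq j i.+2) => ? /=;
    try lia.
  all: by rewrite ?mulr0 ?mulr1 ?subr0 ?addr0 ?add0r. }
rewrite !big_split /= sumrN -mulr_sumr !sum_indicator_ord.
  by rewrite mulr1 addrAC -mulr2n subrr.
all: lia.
Qed.

Lemma sum_ord_divmod n1 n2 (F : nat -> nat -> R) :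
  \sum_(j < n1 * n2) F (j %/ n2)%N (j %% n2)%N = \sum_(a < n1) \sum_(b < n2) F a b.
Proof.
rewrite -(big_mkord xpredT (fun j => F (j %/ n2)%N (j %% n2)%N)) big_nat_mul big_mkord.
apply: eq_bigr => a _.
rewrite -{1}[(a * n2)%N]add0n big_addn mulSn addnK big_mkord.
apply: eq_bigr => b _.
have n2_gt0 : (0 < n2)%N by apply: leq_ltn_trans (ltn_ord b).
by rewrite addnC divnMDl // modnMDl divn_small // modn_small // addn0.
Qed.

Lemma mx_at_rowsum0 m n (A : 'M[R]_(m, n)) :
  (forall i, \sum_j A i j = 0) -> forall r, \sum_(a < n) mx_at A r a = 0.
Proof.
move=> rowsum0 r; rewrite /mx_at; case: insubP => [i _ _|_]; last by rewrite big1.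
by rewrite -[RHS](rowsum0 i); apply: eq_bigr => a _; rewrite valK.
Qed.

Lemma kron_rowsum m1 n1 m2 n2 (A : 'M[R]_(m1, n1)) (B : 'M[R]_(m2, n2)) i :
  \sum_j kron A B i j =
  (\sum_(a < n1) mx_at A (i %/ m2)%N a) * (\sum_(b < n2) mx_at B (i %% m2)%N b).
Proof.
under eq_bigr do rewrite mxE.
rewrite (@sum_ord_divmod n1 n2 (fun a b => mx_at A (i %/ m2)%N a * mx_at B (i %% m2)%N b)).
by rewrite mulr_suml; apply: eq_bigr => a _; rewrite mulr_sumr.
Qed.

Lemma kron_rowsum0l m1 n1 m2 n2 (A : 'M[R]_(m1, n1)) (B : 'M[R]_(m2, n2)) :
  (forall i, \sum_j A i j = 0) -> forall i, \sum_j kron A B i j = 0.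
Proof. by move=> rowsum0 i; rewrite kron_rowsum mx_at_rowsum0 ?mul0r. Qed.

Lemma kron_rowsum0r m1 n1 m2 n2 (A : 'M[R]_(m1, n1)) (B : 'M[R]_(m2, n2)) :
  (forall i, \sum_j B i j = 0) -> forall i, \sum_j kron A B i j = 0.
Proof. by move=> rowsum0 i; rewrite kron_rowsum [X in _ * X]mx_at_rowsum0 ?mulr0. Qed.

Lemma kron_block_mul_ones N k (j : 'I_k) :
  kron_block (R := R) N j *m ones (N ^ k) = 0.
Proof.
apply/castmx_mul_ones/rowsum0_mul_ones.
exact/kron_rowsum0l/kron_rowsum0r/secdiff_rowsum.
Qed.

Lemma kronK_mul_ones N k : kronK (R := R) N k *m ones (N ^ k) = 0.
Proof. by rewrite mxcol_mul -mxcol0; apply: eq_mxcol => j; apply: kron_block_mul_ones. Qed.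

Lemma mulmx_addr_const m n (M : 'M[R]_(m, n)) (b : 'cV_n) c :
  M *m ones n = 0 -> M *m (b + const_mx c) = M *m b.
Proof.
move=> M1; have -> : (const_mx c : 'cV_n) = ones n *m c%:M.
  by apply/matrixP => i j; rewrite [j]ord1 !mxE big_ord1 !mxE mul1r.
by rewrite mulmxDr mulmxA M1 mul0mx addr0.
Qed.

End RowSums.

Section Quadratic.
Variable R : realFieldType.

Lemma sqnorm2_sub_const n (a : 'cV[R]_n) c :
  sqnorm2 (a - const_mx c) = sqnorm2 a - 2 * c * \sum_i a i 0 + n%:R * c ^+ 2.
Proof.
rewrite /sqnorm2.
transitivity (\sum_i (a i 0 ^+ 2 - 2 * c * a i 0 + c ^+ 2)).
  by apply: eq_bigr => i _; rewrite !mxE; ring.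
by rewrite !big_split /= sumrN -mulr_sumr sumr_const card_ord (mulr_natl (c ^+ 2)).
Qed.

Lemma sum_eq0_of_sqnorm2_min n (a : 'cV[R]_n) :
  (forall c, sqnorm2 a <= sqnorm2 (a - const_mx c)) -> \sum_i a i 0 = 0.
Proof.
case: n a => [|n] a min_a; first by rewrite big_ord0.
set s := \sum_i a i 0; set c := s / n.+1%:R.
have n_gt0 : 0 < n.+1%:R :> R by rewrite ltr0n.
have nc : n.+1%:R * c = s by rewrite mulrC divfK ?gt_eqF.
(* [c = s / n] minimises the shifted norm, which there equals [sqnorm2 a - s^2 / n]. *)
have := min_a c; rewrite sqnorm2_sub_const -/s => le_shift.
have s2_le0 : s ^+ 2 <= 0 by nra.
by apply/eqP; rewrite -sqrf_eq0 eq_le s2_le0 sqr_ge0.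
Qed.

End Quadratic.

Section ArgminMean.
Variable R : realType.

Lemma argmin_sum_eq n (y : 'cV[R]_n) (pen : 'cV[R]_n -> R) b :
  (forall b c, pen (b + const_mx c) = pen b) ->
  is_argmin (fun b => 2^-1 * sqnorm2 (y - b) + pen b) b ->
  \sum_i y i 0 = \sum_i b i 0.
Proof.
move=> pen_shift min_b; apply/eqP; rewrite -subr_eq0 -sumrB; apply/eqP.
rewrite (eq_bigr (fun i => (y - b) i 0)) => [|i _]; last by rewrite !mxE.
apply: sum_eq0_of_sqnorm2_min => c.
have := min_b (b + const_mx c); rewrite pen_shift opprD addrA lerD2r.
by rewrite ler_pM2l // invr_gt0 ltr0n.
Qed.

Lemma penalized_argmin_sum_eq n m p (D : 'M[R]_(m, n)) (Delta : 'M[R]_(p, n))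
    (P : 'cV[R]_m -> R) (Q : 'cV[R]_p -> R) lam lamT (y b : 'cV[R]_n) :
  D *m ones n = 0 -> Delta *m ones n = 0 ->
  is_argmin (fun b => 2^-1 * sqnorm2 (y - b) + lam * P (D *m b) + lamT * Q (Delta *m b)) b ->
  \sum_i y i 0 = \sum_i b i 0.
Proof.
move=> D1 Delta1 min_b.
apply: (@argmin_sum_eq _ _ (fun b => lam * P (D *m b) + lamT * Q (Delta *m b))).
  by move=> b' c; rewrite !mulmx_addr_const.
by move=> b'; rewrite !addrA; apply: min_b.
Qed.

End ArgminMean.

Theorem theorem2p4 (R : realType) :
  (* general trend filtering: Delta = L = D^T D *)
  (forall (n m : nat) (src tgt : 'I_m -> 'I_n),
     (forall e, src e != tgt e) ->
     forall (y : 'cV[R]_n) (lamNI lamF lamT : R),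
     0 < lamNI -> 0 < lamF -> 0 < lamT ->
     let D := incidence (R := R) src tgt in
     let Delta := D^T *m D in
     forall bNI bF : 'cV[R]_n,
       is_argmin (obj_NITF D Delta lamNI lamT y) bNI ->
       is_argmin (obj_FLTF D Delta lamF lamT y) bF ->
       \sum_(i < n) y i 0 = \sum_(i < n) bNI i 0 /\
       \sum_(i < n) y i 0 = \sum_(i < n) bF i 0)
  /\
  (* Kronecker trend filtering on the grid graph of {1,...,N}^k: Delta = K *)
  (forall (N k m : nat) (src tgt : 'I_m -> 'I_(N ^ k)),
     is_grid_graph src tgt ->
     forall (y : 'cV[R]_(N ^ k)) (lamNI lamF lamT : R),
     0 < lamNI -> 0 < lamF -> 0 < lamT ->
     let D := incidence (R := R) src tgt in
     let Delta := kronK (R := R) N k in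
     forall bNI bF : 'cV[R]_(N ^ k),
       is_argmin (obj_NITF D Delta lamNI lamT y) bNI ->
       is_argmin (obj_FLTF D Delta lamF lamT y) bF ->
       \sum_(i < N ^ k) y i 0 = \sum_(i < N ^ k) bNI i 0 /\
       \sum_(i < N ^ k) y i 0 = \sum_(i < N ^ k) bF i 0).
Proof.
split.
- move=> n m src tgt _ y lamNI lamF lamT _ _ _ D Delta bNI bF min_NI min_F.
  have D1 : D *m ones n = 0 := incidence_mul_ones R _ _ src tgt.
  have Delta1 : Delta *m ones n = 0 by rewrite -mulmxA D1 mulmx0.
  by split; [exact: penalized_argmin_sum_eq D1 Delta1 min_NI | exact: penalized_argmin_sum_eq D1 Delta1 min_F].
- move=> N k m src tgt _ y lamNI lamF lamT _ _ _ D Delta bNI bF min_NI min_F.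
  have D1 : D *m ones (N ^ k) = 0 := incidence_mul_ones R _ _ src tgt.
  have Delta1 : Delta *m ones (N ^ k) = 0 := kronK_mul_ones R N k.
  by split; [exact: penalized_argmin_sum_eq D1 Delta1 min_NI | exact: penalized_argmin_sum_eq D1 Delta1 min_F].
Qed.
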